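(* Let $\{a_j\}\subset\mathbb{C}$ be a sequence of (not necessarily distinct) points in the open upper half plane, with $|a_1|\le|a_2|\le\cdots$, and suppose that for some constants $C_0$ and $\rho$, $$n(r)=\#\{j: |a_j|\le r\}\le C_0 r^\rho\quad\text{when } r\ge 1.$$ Suppose $\rho>0$ is not an integer, let $p$ be the greatest integer less than $\rho$, and set $$f(z)=\prod_{n=1}^\infty\frac{E_p(z/\overline{a_n})}{E_p(z/a_n)}.$$ Then for $x\in\mathbb{R}$, $$\left|\int_0^x\frac{f'(t)}{f(t)}\,dt\right|=O(|x|^\rho)\quad\text{as } |x|\to\infty.$$
   Context: The canonical factors are $E_0(z)=1-z$ and, for $p\in\mathbb{N}$, $E_p(z)=(1-z)\exp\!\big(z+z^2/2+\cdots+z^p/p\big)$. *)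

From Stdlib Require Import Reals List.
From Coquelicot Require Import Coquelicot.
Open Scope R_scope.

Definition cexp (z : C) : C :=
  (exp (Re z) * cos (Im z), exp (Re z) * sin (Im z)).

Fixpoint cpow (z : C) (k : nat) : C :=
  match k with O => 1%C | S k' => (z * cpow z k')%C end.

Fixpoint canon_sum (p : nat) (z : C) : C :=
  match p with
  | O => 0%C
  | S q => (canon_sum q z + cpow z (S q) / RtoC (INR (S q)))%C
  end.

Definition E (p : nat) (z : C) : C := ((1 - z) * cexp (canon_sum p z))%C.

(* Partial product  prod_{n < N} E_p(z / conj a_n) / E_p(z / a_n)  (the sequence a is 0-indexed). *)
Fixpoint partial_prod (p : nat) (a : nat -> C) (N : nat) (z : C) : C :=
  match N with
  | O => 1%C
  | S M => (partial_prod p a M z * (E p (z / Cconj (a M)) / E p (z / a M)))%C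
  end.

From Stdlib Require Import Reals List ZArith Lra Lia FunctionalExtensionality.
From Coquelicot Require Import Coquelicot.
Open Scope R_scope.

(* On the real axis the quotient [E_p(t/ā) / E_p(t/a)] has modulus one: it is [cis] of a
   phase made of twice the angle of [1 - t/a] (an arctangent difference) minus
   [2 Im (t/a + ... + (t/a)^p/p)].  Hence [f(t) = cis (G t)] with [G] the sum of these phases
   over the zeros, and the integral of [f'/f] from [0] to [x] is [i G(x)].
   The phase at [x] is at most a constant times [(|x|/|a|)^p] and also times
   [(|x|/|a|)^(p+1)], while the counting hypothesis gives [|a_n| ≥ c n^(1/ρ)].  Using the
   first bound for [n ≤ (|x|/c)^ρ] and the second beyond, [|G(x)| = O(|x|^ρ)] because
   [p < ρ < p + 1].  Comparable bounds on the derivatives of the phases make their series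
   converge normally on bounded intervals, so [G] may be differentiated term by term. *)

Lemma Rpower_pos x y : 0 < Rpower x y.
Proof. apply exp_pos. Qed.

Lemma Rpower_1_l y : Rpower 1 y = 1.
Proof. unfold Rpower; rewrite ln_1, Rmult_0_r; apply exp_0. Qed.

Lemma Rpower_le_nonpos x y e : 0 < x <= y -> e <= 0 -> Rpower y e <= Rpower x e.
Proof.
  intros Hxy He.
  replace e with (- (- e)) by ring.
  rewrite (Rpower_Ropp y (- e)), (Rpower_Ropp x (- e)).
  apply Rinv_le_contravar; [apply Rpower_pos | apply Rle_Rpower_l; lra].
Qed.

(* By the mean value theorem the right-hand side is [ξ^(-s)] for some [ξ] in [(t, t + 1)]. *)
Lemma Rpower_step_le s t : 0 <= s -> s <> 1 -> 0 < t ->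
  Rpower (t + 1) (- s) <= (Rpower (t + 1) (1 - s) - Rpower t (1 - s)) / (1 - s).
Proof.
  intros Hs Hs1 Ht.
  destruct (MVT_cor2 (fun x => Rpower x (1 - s)) (fun x => (1 - s) * Rpower x (1 - s - 1))
              t (t + 1)) as [xi [Hdiff Hxi]]; [lra| |].
  { intros x Hx. apply derivable_pt_lim_power. lra. }
  rewrite Hdiff. replace (1 - s - 1) with (- s) by ring.
  replace ((1 - s) * Rpower xi (- s) * (t + 1 - t) / (1 - s)) with (Rpower xi (- s))
    by (field; lra).
  apply Rpower_le_nonpos; lra.
Qed.

Lemma INR_up_to_nat X : 0 < X -> X < INR (Z.to_nat (up X)) /\ INR (Z.to_nat (up X)) <= X + 1.
Proof.
  intros HX. destruct (archimed X) as [Hup1 Hup2].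
  assert (0 <= up X)%Z by (apply le_IZR; lra).
  rewrite INR_IZR_INZ, Z2Nat.id by assumption. lra.
Qed.

Lemma pow_mult_Rpower_head (Y rho : R) (p N : nat) : 1 <= Y -> INR p < rho ->
  INR N <= 2 * Rpower Y rho -> 0 < INR N ->
  Y ^ p * Rpower (INR N) (1 - INR p / rho) <= 2 * Rpower Y rho.
Proof.
  intros HY Hp HN HN0. pose proof (pos_INR p).
  assert (Hsig : 0 <= 1 - INR p / rho <= 1).
  { assert (INR p / rho < 1) by (apply (proj1 (Rdiv_lt_1 (INR p) rho ltac:(lra))); lra).
    assert (0 <= INR p / rho) by (apply Rdiv_le_0_compat; lra). lra. }
  assert (Hsplit : Rpower Y (INR p) * Rpower Y (rho * (1 - INR p / rho)) = Rpower Y rho).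
  { rewrite <- Rpower_plus. f_equal. field. lra. }
  assert (Hpow2 : Rpower 2 (1 - INR p / rho) <= 2).
  { rewrite <- (Rpower_1 2) at 2 by lra. apply Rle_Rpower; lra. }
  assert (HNpow : Rpower (INR N) (1 - INR p / rho) <= 2 * Rpower Y (rho * (1 - INR p / rho))).
  { eapply Rle_trans; [apply Rle_Rpower_l; [lra | split; [exact HN0 | exact HN]]|].
    rewrite <- Rpower_mult_distr, Rpower_mult by (lra || apply Rpower_pos).
    apply Rmult_le_compat_r; [left; apply Rpower_pos | exact Hpow2]. }
  rewrite <- (Rpower_pow p Y) by lra.
  pose proof (Rpower_pos Y (INR p)). rewrite <- Hsplit. nra.
Qed.

Lemma pow_mult_Rpower_tail (Y rho : R) (p N : nat) : 0 < Y -> 0 < rho -> rho < INR (S p) ->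
  Rpower Y rho <= INR N ->
  Y ^ S p * Rpower (INR N) (1 - INR (S p) / rho) <= Rpower Y rho.
Proof.
  intros HY Hrho Hp HN.
  assert (Hs : 1 - INR (S p) / rho <= 0).
  { assert (1 < INR (S p) / rho) by (apply (proj1 (Rlt_div_r _ _ _ Hrho)); lra).
    lra. }
  assert (Hsplit : Rpower Y (INR (S p)) * Rpower Y (rho * (1 - INR (S p) / rho)) = Rpower Y rho).
  { rewrite <- Rpower_plus. f_equal. field. lra. }
  assert (HNpow : Rpower (INR N) (1 - INR (S p) / rho) <= Rpower Y (rho * (1 - INR (S p) / rho))).
  { rewrite <- Rpower_mult. apply Rpower_le_nonpos; [split; [apply Rpower_pos | exact HN] | exact Hs]. }
  rewrite <- (Rpower_pow (S p) Y) by lra.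
  pose proof (Rpower_pos Y (INR (S p))). rewrite <- Hsplit. nra.
Qed.

Fixpoint sumN (F : nat -> R) (N : nat) : R :=
  match N with O => 0 | S M => sumN F M + F M end.

Lemma sum_f_R0_sumN F N : sum_f_R0 F N = sumN F (S N).
Proof. induction N as [|N IH]; simpl in *; [ring | rewrite IH; ring]. Qed.

Lemma sumN_ext F G N : (forall n, F n = G n) -> sumN F N = sumN G N.
Proof. intros H; induction N as [|N IH]; simpl; [|rewrite IH, H]; reflexivity. Qed.

Lemma sumN_le F G N : (forall n, (n < N)%nat -> F n <= G n) -> sumN F N <= sumN G N.
Proof.
  induction N as [|N IH]; intros H; simpl; [lra|].
  assert (sumN F N <= sumN G N) by (apply IH; intros; apply H; lia).
  assert (F N <= G N) by (apply H; lia). lra.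
Qed.

Lemma sumN_nonneg F N : (forall n, 0 <= F n) -> 0 <= sumN F N.
Proof. intros H; induction N as [|N IH]; simpl; [lra|]. specialize (H N); lra. Qed.

Lemma sumN_scal c F N : sumN (fun n => c * F n) N = c * sumN F N.
Proof. induction N as [|N IH]; simpl; [|rewrite IH]; ring. Qed.

Lemma sumN_plus F G N : sumN (fun n => F n + G n) N = sumN F N + sumN G N.
Proof. induction N as [|N IH]; simpl; [|rewrite IH]; ring. Qed.

Lemma sumN_const c N : sumN (fun _ => c) N = INR N * c.
Proof. induction N as [|N IH]; cbn [sumN]; [simpl | rewrite IH, S_INR]; ring. Qed.

Lemma Rabs_sumN_le F N : Rabs (sumN F N) <= sumN (fun n => Rabs (F n)) N.
Proof.
  induction N as [|N IH]; simpl; [rewrite Rabs_R0; lra|].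
  eapply Rle_trans; [apply Rabs_triang | lra].
Qed.

Lemma sumN_add F N M : sumN F (N + M) = sumN F N + sumN (fun k => F (N + k)%nat) M.
Proof.
  induction M as [|M IH]; cbn [sumN]; [rewrite Nat.add_0_r; ring|].
  rewrite Nat.add_succ_r; cbn [sumN]; rewrite IH; ring.
Qed.

Lemma sumN_mono F N M : (forall n, 0 <= F n) -> (N <= M)%nat -> sumN F N <= sumN F M.
Proof.
  intros H HNM. replace M with (N + (M - N))%nat by lia. rewrite sumN_add.
  pose proof (sumN_nonneg (fun k => F (N + k)%nat) (M - N) (fun k => H _)). lra.
Qed.

(** * Comparison of power sums with integrals *)

Lemma sum_Rpower_shift_le s N M : 0 <= s -> s <> 1 -> (1 <= N)%nat ->
  sumN (fun k => Rpower (INR (N + k) + 1) (- s)) M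
  <= (Rpower (INR (N + M)) (1 - s) - Rpower (INR N) (1 - s)) / (1 - s).
Proof.
  intros Hs Hs1 HN. induction M as [|M IH]; cbn [sumN].
  - rewrite Nat.add_0_r. unfold Rdiv. rewrite Rminus_diag, Rmult_0_l. lra.
  - assert (Ht : 0 < INR (N + M)) by (apply lt_0_INR; lia).
    pose proof (Rpower_step_le s _ Hs Hs1 Ht) as Hstep.
    replace (INR (N + S M)) with (INR (N + M) + 1) by (rewrite <- S_INR; f_equal; lia).
    replace ((Rpower (INR (N + M) + 1) (1 - s) - Rpower (INR N) (1 - s)) / (1 - s))
      with ((Rpower (INR (N + M)) (1 - s) - Rpower (INR N) (1 - s)) / (1 - s)
            + (Rpower (INR (N + M) + 1) (1 - s) - Rpower (INR (N + M)) (1 - s)) / (1 - s))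
      by (field; lra).
    lra.
Qed.

Lemma sum_Rpower_head_le sig N : 0 <= sig < 1 -> (1 <= N)%nat ->
  sumN (fun n => Rpower (INR n + 1) (- sig)) N <= Rpower (INR N) (1 - sig) / (1 - sig).
Proof.
  intros Hsig HN. replace N with (1 + (N - 1))%nat at 1 by lia.
  rewrite sumN_add.
  assert (H : sumN (fun k => Rpower (INR (1 + k) + 1) (- sig)) (N - 1)
            <= (Rpower (INR (1 + (N - 1))) (1 - sig) - Rpower (INR 1) (1 - sig)) / (1 - sig))
    by (apply sum_Rpower_shift_le; [lra | intro; lra | lia]).
  replace (1 + (N - 1))%nat with N in H by lia.
  cbn [sumN]. replace (INR 0 + 1) with 1 by (simpl; ring).
  change (INR 1) with 1 in H. rewrite !Rpower_1_l in *.
  apply Rle_trans with (1 + (Rpower (INR N) (1 - sig) - 1) / (1 - sig)); [lra|].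
  apply Rmult_le_reg_r with (1 - sig); [lra|].
  unfold Rdiv. rewrite Rmult_plus_distr_r, !Rmult_assoc, Rinv_l by lra. lra.
Qed.

Lemma sum_Rpower_tail_le s N M : 1 < s -> (1 <= N)%nat ->
  sumN (fun k => Rpower (INR (N + k) + 1) (- s)) M <= Rpower (INR N) (1 - s) / (s - 1).
Proof.
  intros Hs HN. eapply Rle_trans; [apply sum_Rpower_shift_le; [lra | intro; lra | lia]|].
  pose proof (Rpower_pos (INR (N + M)) (1 - s)).
  apply Rmult_le_reg_r with (s - 1); [lra|].
  unfold Rdiv. rewrite !Rmult_assoc, Rinv_l by lra.
  replace (/ (1 - s) * (s - 1)) with (-1) by (field; lra). lra.
Qed.

Lemma sum_Rpower_le s M : 1 < s ->
  sumN (fun n => Rpower (INR n + 1) (- s)) M <= 1 + 1 / (s - 1).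
Proof.
  intros Hs. assert (Hpos : 0 < 1 / (s - 1)) by (apply Rdiv_lt_0_compat; lra).
  destruct M as [|M]; [simpl; lra|].
  replace (S M) with (1 + M)%nat by lia. rewrite sumN_add.
  pose proof (sum_Rpower_tail_le s 1 M Hs (Nat.le_refl 1)) as H.
  cbn [sumN]. replace (INR 0 + 1) with 1 by (simpl; ring).
  change (INR 1) with 1 in H. rewrite !Rpower_1_l in *. lra.
Qed.

Lemma series_cv_of_abs_bounded F : (exists B, forall M, sumN (fun n => Rabs (F n)) M <= B) ->
  {l | Un_cv (fun N => sum_f_R0 F N) l}.
Proof.
  intros HB. apply cv_cauchy_2, cauchy_abs, cv_cauchy_1, growing_cv.
  - intros n. simpl. pose proof (Rabs_pos (F (S n))). lra.
  - destruct HB as [B HB]. exists B. intros x [i ->]. rewrite sum_f_R0_sumN. apply HB.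
Qed.

Lemma Rabs_series_limit_le F l B : Un_cv (fun N => sum_f_R0 F N) l ->
  (forall M, sumN (fun n => Rabs (F n)) M <= B) -> Rabs l <= B.
Proof.
  intros Hl HB. apply Rnot_lt_le. intros Hlt.
  destruct (Hl (Rabs l - B)) as [N HN]; [lra|].
  specialize (HN N (Nat.le_refl N)). unfold Rdist in HN. rewrite Rabs_minus_sym in HN.
  pose proof (Rabs_sumN_le F (S N)) as Hsum. rewrite <- sum_f_R0_sumN in Hsum.
  specialize (HB (S N)). pose proof (Rabs_triang_inv l (sum_f_R0 F N)). lra.
Qed.

Lemma Un_cv_sumN F l : Un_cv (fun N => sum_f_R0 F N) l -> Un_cv (fun N => sumN F N) l.
Proof.
  intros H eps Heps. destruct (H eps Heps) as [N HN]. exists (S N). intros [|n] Hn; [lia|].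
  rewrite <- sum_f_R0_sumN. apply HN. lia.
Qed.

(** * The phase of a canonical quotient on the real axis *)

Definition cis (θ : R) : C := (cos θ, sin θ).

Lemma cis_add x y : (cis x * cis y)%C = cis (x + y).
Proof. unfold cis, Cmult; simpl. rewrite cos_plus, sin_plus. f_equal; ring. Qed.

Lemma cpow_mult z w k : cpow (z * w) k = (cpow z k * cpow w k)%C.
Proof. induction k as [|k IH]; simpl; [|rewrite IH]; ring. Qed.

Lemma cpow_RtoC t k : cpow (RtoC t) k = RtoC (t ^ k).
Proof. induction k as [|k IH]; simpl; [|rewrite IH, RtoC_mult]; reflexivity. Qed.

Lemma Cconj_RtoC r : Cconj (RtoC r) = RtoC r.
Proof. unfold Cconj, RtoC; simpl. f_equal; ring. Qed.

Lemma cpow_conj z k : cpow (Cconj z) k = Cconj (cpow z k).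
Proof.
  induction k as [|k IH]; simpl; [symmetry; apply Cconj_RtoC|].
  rewrite IH, Cmult_conj. reflexivity.
Qed.

Lemma Cmod_cpow z k : Cmod (cpow z k) = Cmod z ^ k.
Proof. induction k as [|k IH]; simpl; [apply Cmod_1 | rewrite Cmod_mult, IH; reflexivity]. Qed.

Lemma RtoC_INR_S_neq0 k : RtoC (INR (S k)) <> 0%C.
Proof. intros H. apply RtoC_inj in H. pose proof (lt_0_INR (S k) ltac:(lia)). lra. Qed.

Lemma canon_sum_conj p z : canon_sum p (Cconj z) = Cconj (canon_sum p z).
Proof.
  induction p as [|p IH]; [symmetry; apply (Cconj_RtoC 0)|].
  cbn [canon_sum]. rewrite IH, Cplus_conj, Cdiv_conj by apply RtoC_INR_S_neq0.
  rewrite Cconj_RtoC, cpow_conj. reflexivity.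
Qed.

Lemma Rabs_Im_le_Cmod z : Rabs (Im z) <= Cmod z.
Proof.
  destruct z as [x y]. unfold Cmod; simpl.
  rewrite <- sqrt_Rsqr_abs. apply sqrt_le_1_alt. unfold Rsqr. pose proof (pow2_ge_0 x). nra.
Qed.

Lemma Im_RtoC_mult r z : Im (RtoC r * z) = r * Im z.
Proof. destruct z; simpl. ring. Qed.

Lemma Im_div_RtoC z r : r <> 0 -> Im (z / RtoC r) = Im z / r.
Proof. intros Hr. destruct z; unfold Cdiv, Cinv, Cmult; simpl. field. exact Hr. Qed.

Lemma Im_pos_neq0 (a : C) : 0 < Im a -> a <> 0%C.
Proof. intros Ha ->. simpl in Ha. lra. Qed.

Lemma Im_pos_sub_RtoC_neq0 (a : C) t : 0 < Im a -> (a - RtoC t)%C <> 0%C.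
Proof. intros Ha H. apply (f_equal Im) in H. simpl in H. unfold Im in Ha. lra. Qed.

Lemma one_sub_RtoC_div_neq0 (a : C) t : 0 < Im a -> (1 - RtoC t / a)%C <> 0%C.
Proof.
  intros Ha H. apply (Im_pos_sub_RtoC_neq0 a t Ha).
  replace (a - RtoC t)%C with (a * (1 - RtoC t / a))%C by (field; apply Im_pos_neq0, Ha).
  rewrite H. ring.
Qed.

Definition inv_pow_im (a : C) (k : nat) : R := Im (cpow (/ a) k).

Fixpoint canon_sum_im (p : nat) (a : C) (t : R) : R :=
  match p with
  | O => 0
  | S q => canon_sum_im q a t + t ^ S q * inv_pow_im a (S q) / INR (S q)
  end.

Fixpoint canon_sum_im_deriv (p : nat) (a : C) (t : R) : R :=
  match p with
  | O => 0
  | S q => canon_sum_im_deriv q a t + t ^ q * inv_pow_im a (S q)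
  end.

(* The argument of [E_p(t/ā) / E_p(t/a)] for real [t], normalised to vanish at [t = 0]. *)
Definition phase (p : nat) (a : C) (t : R) : R :=
  2 * (atan ((Re a - t) / Im a) - atan (Re a / Im a)) - 2 * canon_sum_im p a t.

Definition phase_deriv (p : nat) (a : C) (t : R) : R :=
  -2 * Im a / ((Re a - t) ^ 2 + Im a ^ 2) - 2 * canon_sum_im_deriv p a t.

Lemma Im_canon_sum_real p a t : Im (canon_sum p (RtoC t / a)) = canon_sum_im p a t.
Proof.
  induction p as [|p IH]; [reflexivity|].
  cbn [canon_sum canon_sum_im]. rewrite <- IH.
  change (cpow (RtoC t / a) (S p)) with (cpow (RtoC t * / a) (S p)).
  rewrite cpow_mult, cpow_RtoC, im_plus, Im_div_RtoC, Im_RtoC_mult by apply not_0_INR, Nat.neq_succ_0.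
  reflexivity.
Qed.

Lemma cexp_neq0 z : cexp z <> 0%C.
Proof.
  unfold cexp. intros H. injection H as Hre Him.
  pose proof (exp_pos (Re z)). pose proof (sin2_cos2 (Im z)) as Hpyth. unfold Rsqr in Hpyth.
  apply Rmult_integral in Hre as [Hre|Hre]; [lra|].
  apply Rmult_integral in Him as [Him|Him]; [lra|].
  rewrite Hre, Him in Hpyth. lra.
Qed.

Lemma Cdiv_eq_of_mult (v w z : C) : w <> 0%C -> (z * w = v)%C -> (v / w = z)%C.
Proof. intros Hw <-. field. exact Hw. Qed.

Lemma cexp_conj_div z : (cexp (Cconj z) / cexp z)%C = cis (-2 * Im z).
Proof.
  apply Cdiv_eq_of_mult; [apply cexp_neq0|].
  destruct z as [x y]. unfold cis, cexp, Cconj, Cmult; simpl.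
  replace (-2 * y) with (- y + - y) by ring.
  rewrite cos_plus, sin_plus, cos_neg, sin_neg.
  pose proof (sin2_cos2 y) as Hpyth. unfold Rsqr in Hpyth.
  f_equal; [ transitivity ((exp x * cos y) * (sin y * sin y + cos y * cos y))
           | transitivity ((exp x * - sin y) * (sin y * sin y + cos y * cos y)) ];
    try ring; rewrite Hpyth; ring.
Qed.

Lemma cis_2_atan_sub u v :
  cis (2 * (atan u - atan v)) =
  (((1 + u * v) ^ 2 - (u - v) ^ 2) / ((1 + u ^ 2) * (1 + v ^ 2)),
   2 * (1 + u * v) * (u - v) / ((1 + u ^ 2) * (1 + v ^ 2))).
Proof.
  unfold cis. rewrite cos_2a, sin_2a, cos_minus, sin_minus, !cos_atan, !sin_atan.
  assert (Hu : 0 < 1 + u²) by (pose proof (Rle_0_sqr u); lra).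
  assert (Hv : 0 < 1 + v²) by (pose proof (Rle_0_sqr v); lra).
  pose proof (sqrt_lt_R0 _ Hu). pose proof (sqrt_lt_R0 _ Hv).
  pose proof (sqrt_sqrt _ (Rlt_le _ _ Hu)) as Eu.
  pose proof (sqrt_sqrt _ (Rlt_le _ _ Hv)) as Ev.
  set (A := sqrt (1 + u²)) in *. set (B := sqrt (1 + v²)) in *. unfold Rsqr in *.
  replace (1 + u ^ 2) with (A * A) by (rewrite Eu; ring).
  replace (1 + v ^ 2) with (B * B) by (rewrite Ev; ring).
  f_equal; field; lra.
Qed.

Lemma linear_quotient_cis (a : C) t : 0 < Im a ->
  ((1 - RtoC t / Cconj a) / (1 - RtoC t / a))%C
  = cis (2 * (atan ((Re a - t) / Im a) - atan (Re a / Im a))).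
Proof.
  intros Ha. apply Cdiv_eq_of_mult; [apply one_sub_RtoC_div_neq0, Ha|].
  rewrite cis_2_atan_sub. destruct a as [x y]. simpl in *.
  unfold Cmult, Cminus, Cdiv, Cinv, Cconj, RtoC, Cplus, Copp. simpl.
  assert (0 < x * x + y * y) by nra.
  pose proof (Rle_0_sqr (x - t)). pose proof (Rmult_lt_0_compat _ _ Ha Ha). unfold Rsqr in *.
  f_equal; field; repeat split; apply Rgt_not_eq; nra.
Qed.

Lemma canonical_quotient_cis p (a : C) t : 0 < Im a ->
  (E p (RtoC t / Cconj a) / E p (RtoC t / a))%C = cis (phase p a t).
Proof.
  intros Ha.
  assert (Hconj : (RtoC t / Cconj a)%C = Cconj (RtoC t / a))
    by (rewrite Cdiv_conj, Cconj_RtoC by apply Im_pos_neq0, Ha; reflexivity).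
  unfold E. rewrite Hconj, canon_sum_conj, <- Hconj.
  pose proof (one_sub_RtoC_div_neq0 a t Ha).
  pose proof (cexp_neq0 (canon_sum p (RtoC t / a))).
  pose proof (Im_pos_neq0 a Ha). pose proof (Im_pos_sub_RtoC_neq0 a t Ha).
  assert (Cconj a <> 0%C).
  { intros Hc. apply (f_equal Im) in Hc. simpl in Hc. unfold Im in Ha. lra. }
  transitivity (((1 - RtoC t / Cconj a) / (1 - RtoC t / a)) *
     (cexp (Cconj (canon_sum p (RtoC t / a))) / cexp (canon_sum p (RtoC t / a))))%C.
  { field. tauto. }
  rewrite linear_quotient_cis, cexp_conj_div, cis_add, Im_canon_sum_real by exact Ha.
  unfold phase. f_equal. ring.
Qed.
Lemma is_derive_canon_sum_im p a t :
  is_derive (canon_sum_im p a) t (canon_sum_im_deriv p a t).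
Proof.
  induction p as [|p IH]; cbn [canon_sum_im canon_sum_im_deriv].
  - apply (is_derive_const 0).
  - apply (is_derive_plus (canon_sum_im p a)); [exact IH|].
    auto_derive; [exact I|].
    change (match p with 0%nat => 1 | S _ => INR p + 1 end) with (INR (S p)).
    field. apply not_0_INR, Nat.neq_succ_0.
Qed.

Lemma is_derive_phase p a t : 0 < Im a -> is_derive (phase p a) t (phase_deriv p a t).
Proof.
  intros Ha. unfold phase, phase_deriv.
  apply (is_derive_minus (fun s => 2 * (atan ((Re a - s) / Im a) - atan (Re a / Im a)))
                         (fun s => 2 * canon_sum_im p a s)).
  - auto_derive; [exact I|].
    assert (0 < (Re a - t) ^ 2 + Im a ^ 2) by (pose proof (pow2_ge_0 (Re a - t)); nra).
    field. split; apply Rgt_not_eq; assumption.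
  - apply is_derive_scal, is_derive_canon_sum_im.
Qed.

Lemma ex_derive_canon_sum_im_deriv p a t : ex_derive (canon_sum_im_deriv p a) t.
Proof.
  induction p as [|p IH]; cbn [canon_sum_im_deriv].
  - apply ex_derive_const.
  - apply (ex_derive_plus (canon_sum_im_deriv p a)); [exact IH | auto_derive; exact I].
Qed.

Lemma continuous_phase_deriv p a t : 0 < Im a -> continuity_pt (phase_deriv p a) t.
Proof.
  intros Ha. apply continuity_pt_filterlim, (ex_derive_continuous (phase_deriv p a)).
  unfold phase_deriv.
  apply (ex_derive_minus (fun s => -2 * Im a / ((Re a - s) ^ 2 + Im a ^ 2))
                         (fun s => 2 * canon_sum_im_deriv p a s)).
  - auto_derive. pose proof (pow2_ge_0 (Re a - t)). nra.
  - apply ex_derive_scal, ex_derive_canon_sum_im_deriv.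
Qed.

Lemma Cmod_pos_of_Im_pos (a : C) : 0 < Im a -> 0 < Cmod a.
Proof. intros Ha. apply Cmod_gt_0, Im_pos_neq0, Ha. Qed.

Lemma Cmod_sub_RtoC_ge (a : C) y : Cmod a - Rabs y <= Cmod (a - RtoC y).
Proof.
  pose proof (Cmod_triangle (a - RtoC y) (RtoC y)) as H. rewrite Cmod_R in H.
  replace (a - RtoC y + RtoC y)%C with a in H by ring. lra.
Qed.

Lemma Im_le_Cmod_sub_RtoC (a : C) y : 0 < Im a -> Im a <= Cmod (a - RtoC y).
Proof.
  intros Ha. pose proof (Rabs_Im_le_Cmod (a - RtoC y)) as H. simpl in H.
  rewrite Ropp_0, Rplus_0_r, Rabs_right in H; [exact H|]. unfold Im in Ha. lra.
Qed.

Fixpoint geom_head (p : nat) (a : C) (t : R) : C :=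
  match p with
  | O => 0%C
  | S q => (geom_head q a t + RtoC (t ^ q) * cpow (/ a) (S q))%C
  end.

Lemma Im_geom_head p a t : Im (geom_head p a t) = canon_sum_im_deriv p a t.
Proof.
  induction p as [|p IH]; cbn [geom_head canon_sum_im_deriv]; [reflexivity|].
  rewrite im_plus, Im_RtoC_mult, IH. reflexivity.
Qed.

Lemma inv_sub_RtoC_geom p (a : C) t : 0 < Im a ->
  (/ (a - RtoC t) = geom_head p a t + RtoC (t ^ p) * cpow (/ a) p / (a - RtoC t))%C.
Proof.
  intros Ha. pose proof (Im_pos_sub_RtoC_neq0 a t Ha). pose proof (Im_pos_neq0 a Ha).
  induction p as [|p IH]; cbn [geom_head cpow]; [simpl; field; auto|].
  rewrite IH, <- Cplus_assoc. f_equal.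
  change (t ^ S p) with (t * t ^ p). rewrite RtoC_mult. field. auto.
Qed.

Lemma Im_inv_sub_RtoC (a : C) t : Im (/ (a - RtoC t)) = - Im a / ((Re a - t) ^ 2 + Im a ^ 2).
Proof.
  destruct a as [x y]. unfold Cinv, Cminus, Cplus, Copp, RtoC. simpl.
  rewrite Ropp_0, Rplus_0_r. reflexivity.
Qed.

(* [phase_deriv p a t] is twice the imaginary part of the remainder of the geometric
   expansion of [1 / (a - t)] after [p] terms. *)
Lemma Rabs_phase_deriv_le p (a : C) t : 0 < Im a ->
  Rabs (phase_deriv p a t) <= 2 * Rabs t ^ p / (Cmod a ^ p * Cmod (a - RtoC t)).
Proof.
  intros Ha.
  assert (Hrem : phase_deriv p a t = 2 * Im (RtoC (t ^ p) * cpow (/ a) p / (a - RtoC t))).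
  { pose proof (f_equal Im (inv_sub_RtoC_geom p a t Ha)) as H.
    rewrite im_plus, Im_geom_head, Im_inv_sub_RtoC in H. unfold phase_deriv. lra. }
  rewrite Hrem, Rabs_mult, Rabs_right by lra.
  unfold Rdiv. rewrite Rmult_assoc. apply Rmult_le_compat_l; [lra|].
  eapply Rle_trans; [apply Rabs_Im_le_Cmod|].
  pose proof (Im_pos_sub_RtoC_neq0 a t Ha). pose proof (Im_pos_neq0 a Ha).
  pose proof (Cmod_pos_of_Im_pos a Ha).
  assert (0 < Cmod (a - RtoC t)) by (apply Cmod_gt_0; auto).
  unfold Cdiv. rewrite !Cmod_mult, Cmod_inv, Cmod_cpow, Cmod_inv, Cmod_R, <- RPow_abs, pow_inv
    by auto.
  apply Req_le. field. split; [lra | apply pow_nonzero; lra].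
Qed.

Lemma Rabs_canon_sum_im_le p (a : C) t : 0 < Im a ->
  Rabs (canon_sum_im p a t) <= sumN (fun k => (Rabs t / Cmod a) ^ S k) p.
Proof.
  intros Ha. pose proof (Cmod_pos_of_Im_pos a Ha).
  induction p as [|p IH]; cbn [canon_sum_im sumN]; [rewrite Rabs_R0; lra|].
  eapply Rle_trans; [apply Rabs_triang | apply Rplus_le_compat; [exact IH|]].
  assert (Hcoef : Rabs (inv_pow_im a (S p)) <= / Cmod a ^ S p).
  { unfold inv_pow_im. eapply Rle_trans; [apply Rabs_Im_le_Cmod|].
    rewrite Cmod_cpow, Cmod_inv, pow_inv by apply Im_pos_neq0, Ha. lra. }
  assert (1 <= INR (S p)) by (apply (le_INR 1); lia).
  unfold Rdiv. rewrite !Rabs_mult, Rabs_inv, <- RPow_abs, Rpow_mult_distr, pow_inv.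
  rewrite (Rabs_right (INR (S p))) by lra.
  pose proof (pow_le (Rabs t) (S p) (Rabs_pos t)).
  pose proof (Rabs_pos (inv_pow_im a (S p))).
  assert (/ INR (S p) <= 1) by (rewrite <- Rinv_1; apply Rinv_le_contravar; lra).
  assert (0 < / INR (S p)) by (apply Rinv_0_lt_compat; lra).
  rewrite Rmult_assoc. apply Rmult_le_compat_l; [lra|]. nra.
Qed.

Lemma phase_0 p a : phase p a 0 = 0.
Proof.
  assert (Hsum : canon_sum_im p a 0 = 0).
  { induction p as [|p IH]; cbn [canon_sum_im]; [reflexivity|].
    rewrite IH. simpl. unfold Rdiv. ring. }
  unfold phase. rewrite Hsum, Rminus_0_r. ring.
Qed.

Lemma Rabs_phase_le_far p (a : C) t : 0 < Im a ->
  Rabs (phase p a t) <= 2 * PI + 2 * sumN (fun k => (Rabs t / Cmod a) ^ S k) p.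
Proof.
  intros Ha. unfold phase. eapply Rle_trans; [apply Rabs_triang|].
  rewrite Rabs_Ropp, !Rabs_mult, Rabs_right by lra.
  pose proof (atan_bound ((Re a - t) / Im a)). pose proof (atan_bound (Re a / Im a)).
  assert (Rabs (atan ((Re a - t) / Im a) - atan (Re a / Im a)) <= PI) by (apply Rabs_le; lra).
  pose proof (Rabs_canon_sum_im_le p a t Ha). lra.
Qed.

Lemma Rabs_phase_le_near p (a : C) x : 0 < Im a -> Rabs x <= Cmod a / 2 ->
  Rabs (phase p a x) <= 4 * (Rabs x / Cmod a) ^ S p.
Proof.
  intros Ha Hx. pose proof (Cmod_pos_of_Im_pos a Ha).
  assert (Hderiv : forall y, Rabs y <= Rabs x ->
            Rabs (phase_deriv p a y) <= 4 * Rabs x ^ p / Cmod a ^ S p).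
  { intros y Hy.
    eapply Rle_trans; [apply Rabs_phase_deriv_le, Ha|].
    pose proof (Cmod_sub_RtoC_ge a y).
    assert (0 < Cmod a ^ p) by (apply pow_lt; lra).
    assert (Rabs y ^ p <= Rabs x ^ p) by (apply pow_incr; split; [apply Rabs_pos | exact Hy]).
    apply Rle_trans with (2 * Rabs x ^ p / (Cmod a ^ p * (Cmod a / 2))).
    - unfold Rdiv. apply Rmult_le_compat; [pose proof (pow_le (Rabs y) p (Rabs_pos y)); lra
        | left; apply Rinv_0_lt_compat; nra | lra |].
      apply Rinv_le_contravar; [nra | apply Rmult_le_compat_l; lra].
    - apply Req_le. simpl pow. field. lra. }
  destruct (MVT_cor4 (phase p a) (phase_deriv p a) 0 (Rabs x)) with x as [y [Hmvt Hy]].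
  - intros y _. apply is_derive_phase, Ha.
  - rewrite Rminus_0_r. lra.
  - rewrite phase_0, !Rminus_0_r in Hmvt. rewrite Hmvt, Rabs_mult.
    eapply Rle_trans; [apply Rmult_le_compat_r; [apply Rabs_pos | apply Hderiv; rewrite !Rminus_0_r in Hy; exact Hy]|].
    apply Req_le. unfold Rdiv. rewrite Rpow_mult_distr, pow_inv. simpl pow. ring.
Qed.

Definition phase_const (p : nat) : R := (2 * PI + 2 * INR p + 4) * 2 ^ S p.

Lemma phase_const_pos p : 0 < phase_const p.
Proof.
  unfold phase_const. pose proof PI_RGT_0. pose proof (pos_INR p).
  apply Rmult_lt_0_compat; [lra | apply pow_lt; lra].
Qed.

Lemma Rabs_phase_le p (a : C) x : 0 < Im a ->
  Rabs (phase p a x) <= phase_const p * (Rabs x / Cmod a) ^ p /\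
  Rabs (phase p a x) <= phase_const p * (Rabs x / Cmod a) ^ S p.
Proof.
  intros Ha. pose proof (Cmod_pos_of_Im_pos a Ha).
  set (u := Rabs x / Cmod a).
  assert (Hu : 0 <= u) by (apply Rdiv_le_0_compat; [apply Rabs_pos | lra]).
  pose proof PI_RGT_0. pose proof (pos_INR p).
  assert (1 <= 2 ^ S p) by (apply pow_R1_Rle; lra).
  assert (2 ^ p <= 2 ^ S p) by (apply Rle_pow; [lra | lia]).
  assert (4 <= phase_const p) by (unfold phase_const; nra).
  pose proof (pow_le u p Hu).
  destruct (Rle_lt_dec u (1 / 2)) as [Hnear|Hfar].
  - assert (Hx : Rabs x <= Cmod a / 2).
    { unfold u in Hnear. apply Rmult_le_reg_r with (/ Cmod a); [apply Rinv_0_lt_compat; lra|].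
      replace (Cmod a / 2 * / Cmod a) with (1 / 2) by (field; lra). exact Hnear. }
    pose proof (Rabs_phase_le_near p a x Ha Hx) as Hb. fold u in Hb.
    simpl pow in *. split; apply Rle_trans with (1 := Hb).
    + assert (u * u ^ p <= 1 / 2 * u ^ p) by (apply Rmult_le_compat_r; lra). nra.
    + apply Rmult_le_compat_r; [apply Rmult_le_pos |]; lra.
  - pose proof (Rabs_phase_le_far p a x Ha) as Hb. fold u in Hb.
    assert (Hsum : sumN (fun k => u ^ S k) p <= INR p * (2 * u) ^ p).
    { rewrite <- sumN_const. apply sumN_le. intros k Hk.
      apply Rle_trans with ((2 * u) ^ S k); [apply pow_incr; lra | apply Rle_pow; [lra | lia]]. }
    assert (1 <= (2 * u) ^ p) by (apply pow_R1_Rle; lra).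
    rewrite Rpow_mult_distr in *.
    assert (Rabs (phase p a x) <= (2 * PI + 2 * INR p + 4) * (2 ^ p * u ^ p)) by nra.
    assert (0 <= (2 * PI + 2 * INR p + 4) * (2 ^ p * u ^ p)) by nra.
    unfold phase_const. simpl pow. split.
    + replace ((2 * PI + 2 * INR p + 4) * (2 * 2 ^ p) * u ^ p)
        with (2 * ((2 * PI + 2 * INR p + 4) * (2 ^ p * u ^ p))) by ring. lra.
    + replace ((2 * PI + 2 * INR p + 4) * (2 * 2 ^ p) * (u * u ^ p))
        with (2 * u * ((2 * PI + 2 * INR p + 4) * (2 ^ p * u ^ p))) by ring. nra.
Qed.

(** * Growth of the zeros *)

Lemma Cmod_sorted_le (a : nat -> C) : (forall j, Cmod (a j) <= Cmod (a (S j))) ->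
  forall i j, (i <= j)%nat -> Cmod (a i) <= Cmod (a j).
Proof. intros Hsort i j Hij. induction Hij as [|j _ IH]; [lra | specialize (Hsort j); lra]. Qed.

Lemma counting_index_le (a : nat -> C) (C0 rho : R) :
  (forall j, Cmod (a j) <= Cmod (a (S j))) ->
  (forall r : R, 1 <= r ->
     forall l : list nat, NoDup l -> List.Forall (fun j => Cmod (a j) <= r) l ->
       INR (length l) <= C0 * Rpower r rho) ->
  forall n, INR (S n) <= C0 * Rpower (Rmax 1 (Cmod (a n))) rho.
Proof.
  intros Hsort Hcount n. replace (S n) with (length (seq 0 (S n))) by apply length_seq.
  apply Hcount; [apply Rmax_l | apply seq_NoDup|].
  apply Forall_forall. intros j Hj. apply in_seq in Hj.
  eapply Rle_trans; [apply (Cmod_sorted_le a Hsort j n); lia | apply Rmax_r].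
Qed.

Lemma zeros_growth_lower_bound (a : nat -> C) (C0 rho : R) :
  0 < rho -> (forall j, 0 < Im (a j)) ->
  (forall j, Cmod (a j) <= Cmod (a (S j))) ->
  (forall r : R, 1 <= r ->
     forall l : list nat, NoDup l -> List.Forall (fun j => Cmod (a j) <= r) l ->
       INR (length l) <= C0 * Rpower r rho) ->
  exists c, 0 < c /\ forall n, c * Rpower (INR n + 1) (/ rho) <= Cmod (a n).
Proof.
  intros Hrho Ha_upper Hsort Hcount.
  pose proof (counting_index_le a C0 rho Hsort Hcount) as Hindex.
  assert (HC0 : 0 < C0).
  { specialize (Hindex 0%nat). simpl in Hindex.
    pose proof (Rpower_pos (Rmax 1 (Cmod (a 0%nat))) rho).
    destruct (Rle_lt_dec C0 0); [nra | assumption]. }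
  pose proof (Cmod_pos_of_Im_pos (a 0%nat) (Ha_upper 0%nat)).
  set (m0 := Rmin 1 (Cmod (a 0%nat))).
  assert (Hm0 : 0 < m0) by (apply Rmin_glb_lt; lra).
  set (K := Rpower C0 (/ rho)).
  assert (HK : 0 < K) by apply Rpower_pos.
  exists (m0 / K). split; [apply Rdiv_lt_0_compat; assumption|]. intros n.
  set (r := Rmax 1 (Cmod (a n))).
  assert (Hr : 1 <= r) by apply Rmax_l.
  assert (Hroot : Rpower (INR n + 1) (/ rho) <= K * r).
  { rewrite <- S_INR.
    eapply Rle_trans.
    { apply Rle_Rpower_l; [left; apply Rinv_0_lt_compat, Hrho|].
      split; [apply lt_0_INR; lia | apply Hindex]. }
    fold r. rewrite <- Rpower_mult_distr by (assumption || apply Rpower_pos).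
    rewrite Rpower_mult, Rinv_r, Rpower_1 by (lra || apply Rgt_not_eq, Hrho).
    apply Rle_refl. }
  assert (Hr_le : m0 * r <= Cmod (a n)).
  { unfold r, m0. destruct (Rle_lt_dec 1 (Cmod (a n))).
    - rewrite Rmax_right by lra. pose proof (Rmin_l 1 (Cmod (a 0%nat))). nra.
    - rewrite Rmax_left, Rmult_1_r by lra.
      eapply Rle_trans; [apply Rmin_r | apply (Cmod_sorted_le a Hsort); lia]. }
  apply Rle_trans with (m0 / K * (K * r)).
  - apply Rmult_le_compat_l; [apply Rlt_le, Rdiv_lt_0_compat |]; assumption.
  - replace (m0 / K * (K * r)) with (m0 * r) by (field; lra). exact Hr_le.
Qed.

Lemma ratio_pow_le_of_growth (A : C) c rho n x k : 0 < c -> 0 < rho ->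
  c * Rpower (INR n + 1) (/ rho) <= Cmod A ->
  (Rabs x / Cmod A) ^ k <= (Rabs x / c) ^ k * Rpower (INR n + 1) (- (INR k / rho)).
Proof.
  intros Hc Hrho Hgrowth.
  assert (Hw : 0 < Rpower (INR n + 1) (/ rho)) by apply Rpower_pos.
  assert (0 < INR n + 1) by (pose proof (pos_INR n); lra).
  replace (Rpower (INR n + 1) (- (INR k / rho))) with (Rpower (INR n + 1) (- / rho) ^ k).
  2:{ rewrite <- Rpower_pow, Rpower_mult by apply Rpower_pos. f_equal. field. lra. }
  rewrite <- Rpow_mult_distr. apply pow_incr. split.
  - apply Rdiv_le_0_compat; [apply Rabs_pos | nra].
  - rewrite Rpower_Ropp. unfold Rdiv. rewrite Rmult_assoc. apply Rmult_le_compat_l; [apply Rabs_pos|].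
    rewrite <- Rinv_mult. apply Rinv_le_contravar; nra.
Qed.

(** * The series of phases *)

Lemma Rabs_add_1_pos t : 0 < Rabs t + 1.
Proof. pose proof (Rabs_pos t). lra. Qed.

Section PhaseSeries.

Variables (p : nat) (a : nat -> C) (c rho : R).
Hypothesis Hc : 0 < c.
Hypothesis Hrho : 0 < rho.
Hypothesis Hp_lt : INR p < rho.
Hypothesis Hrho_lt : rho < INR (S p).
Hypothesis Ha_upper : forall j, 0 < Im (a j).
Hypothesis Ha_growth : forall n, c * Rpower (INR n + 1) (/ rho) <= Cmod (a n).

Lemma tail_exponent_gt_1 : 1 < INR (S p) / rho.
Proof. apply (proj1 (Rlt_div_r _ _ _ Hrho)). lra. Qed.

Lemma Rabs_phase_term_le_head n t :
  Rabs (phase p (a n) t)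
  <= phase_const p * (Rabs t / c) ^ p * Rpower (INR n + 1) (- (INR p / rho)).
Proof.
  eapply Rle_trans; [apply (proj1 (Rabs_phase_le p (a n) t (Ha_upper n)))|]. rewrite Rmult_assoc.
  apply Rmult_le_compat_l; [apply Rlt_le, phase_const_pos | apply ratio_pow_le_of_growth; auto].
Qed.

Lemma Rabs_phase_term_le_tail n t :
  Rabs (phase p (a n) t)
  <= phase_const p * (Rabs t / c) ^ S p * Rpower (INR n + 1) (- (INR (S p) / rho)).
Proof.
  eapply Rle_trans; [apply (proj2 (Rabs_phase_le p (a n) t (Ha_upper n)))|]. rewrite Rmult_assoc.
  apply Rmult_le_compat_l; [apply Rlt_le, phase_const_pos | apply ratio_pow_le_of_growth; auto].
Qed.

Lemma phase_series_abs_bounded t M :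
  sumN (fun n => Rabs (phase p (a n) t)) M
  <= phase_const p * (Rabs t / c) ^ S p * (1 + 1 / (INR (S p) / rho - 1)).
Proof.
  eapply Rle_trans; [apply sumN_le; intros n _; apply Rabs_phase_term_le_tail|].
  rewrite sumN_scal. apply Rmult_le_compat_l; [|apply sum_Rpower_le, tail_exponent_gt_1].
  apply Rmult_le_pos; [apply Rlt_le, phase_const_pos | apply pow_le, Rdiv_le_0_compat];
    [apply Rabs_pos | exact Hc].
Qed.

Definition near_count (T : R) : nat := Z.to_nat (up (Rpower (2 * T / c) rho)).

Lemma Cmod_ge_of_near_count T n : 0 < T -> (near_count T <= n)%nat -> 2 * T <= Cmod (a n).
Proof.
  intros HT Hn.
  assert (HX : 0 < Rpower (2 * T / c) rho) by apply Rpower_pos.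
  destruct (INR_up_to_nat _ HX) as [Hcount _]. fold (near_count T) in Hcount.
  assert (INR (near_count T) <= INR n) by (apply le_INR, Hn).
  assert (Hroot : 2 * T / c <= Rpower (INR n + 1) (/ rho)).
  { replace (2 * T / c) with (Rpower (Rpower (2 * T / c) rho) (/ rho)).
    - apply Rle_Rpower_l; [left; apply Rinv_0_lt_compat, Hrho | lra].
    - rewrite Rpower_mult, Rinv_r, Rpower_1 by first [apply Rgt_not_eq, Hrho | apply Rdiv_lt_0_compat; lra].
      reflexivity. }
  eapply Rle_trans; [|apply Ha_growth].
  replace (2 * T) with (c * (2 * T / c)) by (field; lra).
  apply Rmult_le_compat_l; lra.
Qed.

(* Dominates [phase_deriv p (a n)] on [(-T, T)]: for the finitely many zeros with
   [|a n| < 2 T] through [Im a ≤ |a - y|], for the others through [|a|/2 ≤ |a - y|]. *)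
Definition deriv_majorant (T : R) (n : nat) : R :=
  (if lt_dec n (near_count T) then 2 * T ^ p / (Cmod (a n) ^ p * Im (a n)) else 0)
  + 4 * T ^ p * (1 / c) ^ S p * Rpower (INR n + 1) (- (INR (S p) / rho)).

Lemma deriv_majorant_nonneg T n : 0 < T -> 0 <= deriv_majorant T n.
Proof.
  intros HT. unfold deriv_majorant. pose proof (Cmod_pos_of_Im_pos _ (Ha_upper n)).
  pose proof (Ha_upper n). pose proof (pow_lt T p HT). pose proof (pow_lt _ p H).
  pose proof (Rpower_pos (INR n + 1) (- (INR (S p) / rho))).
  assert (0 < (1 / c) ^ S p) by (apply pow_lt, Rdiv_lt_0_compat; lra).
  apply Rplus_le_le_0_compat; [destruct lt_dec |]; [| lra |].
  - apply Rlt_le, Rdiv_lt_0_compat; [lra | apply Rmult_lt_0_compat; assumption].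
  - apply Rmult_le_pos; [apply Rmult_le_pos |]; lra.
Qed.

Lemma Rabs_phase_deriv_le_majorant T n y : 0 < T -> Rabs y < T ->
  Rabs (phase_deriv p (a n) y) <= deriv_majorant T n.
Proof.
  intros HT Hy. pose proof (Cmod_pos_of_Im_pos _ (Ha_upper n)) as Han.
  assert (0 < Cmod (a n) ^ p) by (apply pow_lt, Han).
  assert (Rabs y ^ p <= T ^ p) by (apply pow_incr; split; [apply Rabs_pos | lra]).
  pose proof (pow_le (Rabs y) p (Rabs_pos y)).
  pose proof (Rabs_phase_deriv_le p (a n) y (Ha_upper n)) as Hd.
  pose proof (Im_le_Cmod_sub_RtoC (a n) y (Ha_upper n)).
  pose proof (Ha_upper n).
  unfold deriv_majorant.
  assert (Htail : 0 <= 4 * T ^ p * (1 / c) ^ S p * Rpower (INR n + 1) (- (INR (S p) / rho))).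
  { pose proof (Rpower_pos (INR n + 1) (- (INR (S p) / rho))).
    assert (0 < (1 / c) ^ S p) by (apply pow_lt, Rdiv_lt_0_compat; lra).
    pose proof (pow_lt T p HT). apply Rmult_le_pos; [apply Rmult_le_pos |]; lra. }
  destruct lt_dec as [Hnear|Hfar].
  - enough (2 * Rabs y ^ p / (Cmod (a n) ^ p * Cmod (a n - RtoC y))
            <= 2 * T ^ p / (Cmod (a n) ^ p * Im (a n))) by lra.
    unfold Rdiv. apply Rmult_le_compat; [lra | left; apply Rinv_0_lt_compat; nra | lra |].
    apply Rinv_le_contravar; [apply Rmult_lt_0_compat; assumption | apply Rmult_le_compat_l; lra].
  - rewrite Rplus_0_l.
    assert (H2T : 2 * T <= Cmod (a n)) by (apply Cmod_ge_of_near_count; [exact HT | lia]).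
    pose proof (Cmod_sub_RtoC_ge (a n) y).
    pose proof (ratio_pow_le_of_growth (a n) c rho n 1 (S p) Hc Hrho (Ha_growth n)) as Hratio.
    rewrite Rabs_R1 in Hratio.
    eapply Rle_trans; [exact Hd|].
    apply Rle_trans with (4 * T ^ p * (1 / Cmod (a n)) ^ S p).
    + unfold Rdiv. rewrite Rmult_1_l, pow_inv. simpl pow.
      apply Rle_trans with (2 * T ^ p * / (Cmod (a n) ^ p * (Cmod (a n) / 2))).
      * apply Rmult_le_compat; [lra | left; apply Rinv_0_lt_compat; nra | lra |].
        apply Rinv_le_contravar; [nra | apply Rmult_le_compat_l; lra].
      * apply Req_le. field. lra.
    + rewrite !Rmult_assoc. apply Rmult_le_compat_l; [lra|].
      apply Rmult_le_compat_l; [apply pow_le; lra | exact Hratio].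
Qed.

Lemma deriv_majorant_sum_bounded T : 0 < T ->
  exists B, forall M, sumN (deriv_majorant T) M <= B.
Proof.
  intros HT. set (N0 := near_count T).
  set (near := fun n => if lt_dec n N0 then 2 * T ^ p / (Cmod (a n) ^ p * Im (a n)) else 0).
  set (K := 4 * T ^ p * (1 / c) ^ S p).
  assert (Hnear : forall n, 0 <= near n).
  { intros n. unfold near. pose proof (Cmod_pos_of_Im_pos _ (Ha_upper n)).
    pose proof (Ha_upper n). pose proof (pow_lt T p HT). pose proof (pow_lt _ p H).
    destruct lt_dec; [|lra]. apply Rlt_le, Rdiv_lt_0_compat; [lra | apply Rmult_lt_0_compat; assumption]. }
  assert (HK : 0 <= K).
  { unfold K. pose proof (pow_lt T p HT).
    assert (0 < (1 / c) ^ S p) by (apply pow_lt, Rdiv_lt_0_compat; lra). nra. }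
  exists (sumN near N0 + K * (1 + 1 / (INR (S p) / rho - 1))). intros M.
  unfold deriv_majorant. fold N0. fold near. fold K.
  rewrite sumN_plus. apply Rplus_le_compat.
  - apply Rle_trans with (sumN near (N0 + M)); [apply sumN_mono; [exact Hnear | lia]|].
    rewrite sumN_add.
    assert (Hzero : sumN (fun k => near (N0 + k)%nat) M = 0).
    { rewrite <- (Rmult_0_r (INR M)), <- sumN_const. apply sumN_ext. intros k.
      unfold near. destruct lt_dec; [lia | reflexivity]. }
    lra.
  - rewrite sumN_scal. apply Rmult_le_compat_l; [exact HK | apply sum_Rpower_le, tail_exponent_gt_1].
Qed.

Lemma derivable_pt_lim_phase_partial n x :
  derivable_pt_lim (fun y => sum_f_R0 (fun k => phase p (a k) y) n) x
                   (sum_f_R0 (fun k => phase_deriv p (a k) x) n).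
Proof.
  induction n as [|n IH]; simpl; [apply is_derive_Reals, is_derive_phase, Ha_upper|].
  apply (derivable_pt_lim_plus (fun y => sum_f_R0 (fun k => phase p (a k) y) n)); [exact IH|].
  apply is_derive_Reals, is_derive_phase, Ha_upper.
Qed.

Lemma continuity_pt_phase_deriv_partial n x :
  continuity_pt (fun y => sum_f_R0 (fun k => phase_deriv p (a k) y) n) x.
Proof.
  induction n as [|n IH]; simpl; [apply continuous_phase_deriv, Ha_upper|].
  apply (continuity_pt_plus (fun y => sum_f_R0 (fun k => phase_deriv p (a k) y) n)); [exact IH|].
  apply continuous_phase_deriv, Ha_upper.
Qed.

Lemma phase_series_regular :
  exists G G' : R -> R,
    (forall t, Un_cv (fun N => sum_f_R0 (fun n => phase p (a n) t) N) (G t)) /\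
    (forall t, derivable_pt_lim G t (G' t)) /\ (forall t, continuity_pt G' t).
Proof.
  set (phases := fun n t => phase p (a n) t).
  set (derivs := fun n t => phase_deriv p (a n) t).
  assert (Hcv : forall t, {l | Un_cv (fun N => SP phases N t) l}).
  { intros t. apply series_cv_of_abs_bounded. eexists. apply phase_series_abs_bounded. }
  assert (Hcv' : forall t, {l | Un_cv (fun N => SP derivs N t) l}).
  { intros t. apply series_cv_of_abs_bounded.
    destruct (deriv_majorant_sum_bounded _ (Rabs_add_1_pos t)) as [B HB]. exists B. intros M.
    eapply Rle_trans; [|apply HB]. apply sumN_le. intros n _.
    apply Rabs_phase_deriv_le_majorant; [apply Rabs_add_1_pos | lra]. }
  assert (Hcvu : forall T : posreal, CVU (fun n => SP derivs n) (SFL derivs Hcv') 0 T).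
  { intros T. apply CVN_CVU. exists (deriv_majorant T). pose proof (cond_pos T) as HT.
    destruct (series_cv_of_abs_bounded (fun k => Rabs (deriv_majorant T k))) as [l Hl].
    { destruct (deriv_majorant_sum_bounded T HT) as [B HB]. exists B. intros M.
      rewrite (sumN_ext _ (deriv_majorant T)); [apply HB|]. intros n.
      rewrite Rabs_Rabsolu. apply Rabs_right, Rle_ge, deriv_majorant_nonneg, HT. }
    exists l. split; [exact Hl|]. intros n y Hy. unfold Boule in Hy. rewrite Rminus_0_r in Hy.
    apply Rabs_phase_deriv_le_majorant; assumption. }
  exists (SFL phases Hcv), (SFL derivs Hcv').
  assert (Hball : forall t, Boule 0 (mkposreal _ (Rabs_add_1_pos t)) t).
  { intros t. unfold Boule; simpl. rewrite Rminus_0_r. lra. }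
  split; [|split]; intros t.
  - unfold SFL. destruct (Hcv t) as [l Hl]. exact Hl.
  - apply (CVU_derivable (fun n => SP phases n) (fun n => SP derivs n) _ _ 0 _
             (Hcvu (mkposreal _ (Rabs_add_1_pos t))));
      [| intros; apply derivable_pt_lim_phase_partial | apply Hball].
    intros x _. unfold SFL. destruct (Hcv x) as [l Hl]. exact Hl.
  - apply (CVU_continuity (fun n => SP derivs n) _ 0 _ (Hcvu (mkposreal _ (Rabs_add_1_pos t))));
      [intros; apply continuity_pt_phase_deriv_partial | apply Hball].
Qed.

Lemma head_exponent_bounds : 0 <= INR p / rho < 1.
Proof.
  pose proof (pos_INR p). split; [apply Rdiv_le_0_compat; lra|].
  apply (proj1 (Rdiv_lt_1 (INR p) rho Hrho)). exact Hp_lt.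
Qed.

Lemma phase_sum_head_le x N : 1 <= Rabs x / c -> (1 <= N)%nat ->
  INR N <= 2 * Rpower (Rabs x / c) rho ->
  sumN (fun n => Rabs (phase p (a n) x)) N
  <= phase_const p * (2 / (1 - INR p / rho)) * Rpower (Rabs x / c) rho.
Proof.
  intros HY HN HNY. pose proof head_exponent_bounds as Hsig. pose proof (phase_const_pos p).
  assert (0 < INR N) by (apply lt_0_INR; lia).
  eapply Rle_trans; [apply sumN_le; intros n _; apply Rabs_phase_term_le_head|].
  rewrite sumN_scal.
  eapply Rle_trans; [apply Rmult_le_compat_l; [apply Rmult_le_pos; [lra | apply pow_le; lra]
                                             | apply sum_Rpower_head_le; assumption]|].
  pose proof (pow_mult_Rpower_head (Rabs x / c) rho p N HY Hp_lt HNY ltac:(assumption)) as Hb.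
  apply Rle_trans with (phase_const p / (1 - INR p / rho)
                        * ((Rabs x / c) ^ p * Rpower (INR N) (1 - INR p / rho))).
  - apply Req_le. field. lra.
  - apply Rle_trans with (phase_const p / (1 - INR p / rho) * (2 * Rpower (Rabs x / c) rho)).
    + apply Rmult_le_compat_l; [apply Rdiv_le_0_compat; lra | exact Hb].
    + apply Req_le. field. lra.
Qed.

Lemma phase_sum_tail_le x N M : 1 <= Rabs x / c -> (1 <= N)%nat ->
  Rpower (Rabs x / c) rho <= INR N ->
  sumN (fun k => Rabs (phase p (a (N + k)%nat) x)) M
  <= phase_const p * (1 / (INR (S p) / rho - 1)) * Rpower (Rabs x / c) rho.
Proof.
  intros HY HN HNY. pose proof tail_exponent_gt_1 as Hs. pose proof (phase_const_pos p).
  eapply Rle_trans; [apply sumN_le; intros n _; apply Rabs_phase_term_le_tail|].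
  rewrite sumN_scal.
  eapply Rle_trans; [apply Rmult_le_compat_l; [apply Rmult_le_pos; [lra | apply pow_le; lra]
                                             | apply sum_Rpower_tail_le; assumption]|].
  pose proof (pow_mult_Rpower_tail (Rabs x / c) rho p N ltac:(lra) Hrho Hrho_lt HNY) as Hb.
  apply Rle_trans with (phase_const p / (INR (S p) / rho - 1)
                        * ((Rabs x / c) ^ S p * Rpower (INR N) (1 - INR (S p) / rho))).
  - apply Req_le. field. lra.
  - apply Rle_trans with (phase_const p / (INR (S p) / rho - 1) * Rpower (Rabs x / c) rho).
    + apply Rmult_le_compat_l; [apply Rdiv_le_0_compat; lra | exact Hb].
    + apply Req_le. field. lra.
Qed.

Definition growth_const : R :=
  phase_const p * (2 / (1 - INR p / rho) + 1 / (INR (S p) / rho - 1)) * Rpower (/ c) rho.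

Lemma phase_sum_growth x M : c <= Rabs x ->
  sumN (fun n => Rabs (phase p (a n) x)) M <= growth_const * Rpower (Rabs x) rho.
Proof.
  intros Hx. set (Y := Rabs x / c).
  assert (HY : 1 <= Y) by (unfold Y; apply (proj1 (Rle_div_r 1 _ _ Hc)); lra).
  assert (HYrho : 1 <= Rpower Y rho) by (rewrite <- (Rpower_1_l rho); apply Rle_Rpower_l; lra).
  set (N := Z.to_nat (up (Rpower Y rho))).
  destruct (INR_up_to_nat (Rpower Y rho)) as [HN1 HN2]; [lra|]. fold N in HN1, HN2.
  assert (HN : (1 <= N)%nat) by (destruct N; [simpl in HN1; lra | lia]).
  eapply Rle_trans; [apply (sumN_mono _ M (N + M)); [intros; apply Rabs_pos | lia]|].
  rewrite sumN_add. eapply Rle_trans.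
  { apply Rplus_le_compat; [apply phase_sum_head_le | apply phase_sum_tail_le];
      fold Y; (assumption || lra). }
  replace (Rpower (Rabs x / c) rho) with (Rpower (Rabs x) rho * Rpower (/ c) rho)
    by (unfold Rdiv; rewrite Rpower_mult_distr by (lra || apply Rinv_0_lt_compat, Hc);
        reflexivity).
  unfold growth_const. apply Req_le. ring.
Qed.

Lemma phase_series_growth G x :
  Un_cv (fun N => sum_f_R0 (fun n => phase p (a n) x) N) G ->
  c <= Rabs x -> Rabs G <= growth_const * Rpower (Rabs x) rho.
Proof.
  intros HG Hx. apply (Rabs_series_limit_le _ _ _ HG). intros M. apply phase_sum_growth, Hx.
Qed.

End PhaseSeries.


(** * The logarithmic derivative on the real axis *)

Lemma is_derive_RtoC_estimate (f : C -> C) (t : R) (l : C) : is_derive f (RtoC t) l ->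
  forall eps, 0 < eps -> exists delta : posreal, forall h, Rabs h < delta ->
    Cmod (f (RtoC (t + h)) - f (RtoC t) - RtoC h * l)%C <= eps * Rabs h.
Proof.
  intros [_ Hdiff] eps Heps.
  destruct (Hdiff (RtoC t) (fun P HP => HP) (mkposreal eps Heps)) as [delta Hdelta].
  exists delta. intros h Hh.
  assert (Hstep : (RtoC (t + h) + - RtoC t)%C = RtoC h)
    by (unfold RtoC, Cplus, Copp; simpl; f_equal; ring).
  specialize (Hdelta (RtoC (t + h))).
  unfold ball, norm, minus, plus, opp, scal in Hdelta; simpl in Hdelta.
  unfold AbsRing_ball, abs, minus, plus, opp, mult in Hdelta; simpl in Hdelta.
  rewrite Hstep, Cmod_R in Hdelta. apply Hdelta, Hh.
Qed.

Lemma derivable_pt_lim_proj_RtoC (f : C -> C) (proj : C -> R) (t : R) (l : C) :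
  (forall z w : C, proj (z - w)%C = proj z - proj w) ->
  (forall (r : R) (z : C), proj (RtoC r * z)%C = r * proj z) ->
  (forall z, Rabs (proj z) <= Cmod z) ->
  is_derive f (RtoC t) l -> derivable_pt_lim (fun s => proj (f (RtoC s))) t (proj l).
Proof.
  intros Hsub Hscal Hle Hf eps Heps.
  destruct (is_derive_RtoC_estimate f t l Hf (eps / 2)) as [delta Hdelta]; [lra|].
  exists delta. intros h Hh0 Hh. specialize (Hdelta h Hh).
  assert (0 < Rabs h) by (apply Rabs_pos_lt, Hh0).
  replace ((proj (f (RtoC (t + h))) - proj (f (RtoC t))) / h - proj l)
    with (proj (f (RtoC (t + h)) - f (RtoC t) - RtoC h * l)%C / h)
    by (rewrite !Hsub, Hscal; field; exact Hh0).
  unfold Rdiv. rewrite Rabs_mult, Rabs_inv.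
  apply Rle_lt_trans with (eps / 2 * Rabs h * / Rabs h).
  - apply Rmult_le_compat_r; [left; apply Rinv_0_lt_compat; lra|].
    eapply Rle_trans; [apply Hle | exact Hdelta].
  - replace (eps / 2 * Rabs h * / Rabs h) with (eps / 2) by (field; lra). lra.
Qed.

Lemma derivable_pt_lim_Re_Im_RtoC (f : C -> C) (t : R) (l : C) : is_derive f (RtoC t) l ->
  derivable_pt_lim (fun s => Re (f (RtoC s))) t (Re l) /\
  derivable_pt_lim (fun s => Im (f (RtoC s))) t (Im l).
Proof.
  intros Hf. split; apply derivable_pt_lim_proj_RtoC; try exact Hf.
  - intros [] []; simpl; ring.
  - intros r []; simpl; ring.
  - apply re_le_Cmod.
  - intros [] []; simpl; ring.
  - intros r []; simpl; ring.
  - apply Rabs_Im_le_Cmod.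
Qed.

Lemma Cmod_imag y : Cmod ((0, y) : C) = Rabs y.
Proof.
  unfold Cmod. simpl. replace (0 * (0 * 1) + y * (y * 1)) with (Rsqr y) by (unfold Rsqr; ring).
  apply sqrt_Rsqr_abs.
Qed.

Lemma is_derive_cis_real (f : C -> C) (G : R -> R) t (l : C) (g : R) :
  (forall s, f (RtoC s) = cis (G s)) -> is_derive f (RtoC t) l -> derivable_pt_lim G t g ->
  l = (- sin (G t) * g, cos (G t) * g).
Proof.
  intros Hf Hl HG. destruct (derivable_pt_lim_Re_Im_RtoC f t l Hl) as [Hre Him].
  assert (Hcos : derivable_pt_lim (fun s => Re (f (RtoC s))) t (- sin (G t) * g)).
  { replace (fun s => Re (f (RtoC s))) with (fun s => cos (G s))
      by (apply functional_extensionality; intros s; rewrite Hf; reflexivity).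
    apply (derivable_pt_lim_comp G cos), derivable_pt_lim_cos. exact HG. }
  assert (Hsin : derivable_pt_lim (fun s => Im (f (RtoC s))) t (cos (G t) * g)).
  { replace (fun s => Im (f (RtoC s))) with (fun s => sin (G s))
      by (apply functional_extensionality; intros s; rewrite Hf; reflexivity).
    apply (derivable_pt_lim_comp G sin), derivable_pt_lim_sin. exact HG. }
  apply injective_projections; simpl.
  - exact (uniqueness_limite _ _ _ _ Hre Hcos).
  - exact (uniqueness_limite _ _ _ _ Him Hsin).
Qed.

Lemma is_RInt_log_deriv_cis (f : C -> C) (df : R -> C) (G G' : R -> R) x :
  (forall t, f (RtoC t) = cis (G t)) -> (forall t, is_derive f (RtoC t) (df t)) ->
  (forall t, derivable_pt_lim G t (G' t)) -> (forall t, continuity_pt G' t) ->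
  is_RInt (fun t => (df t / f (RtoC t))%C) 0 x ((0, G x - G 0) : C).
Proof.
  intros Hf Hdf HG HG'.
  apply is_RInt_ext with (f := fun t => (0, G' t) : C).
  { intros t _. rewrite Hf, (is_derive_cis_real f G t (df t) (G' t) Hf (Hdf t) (HG t)).
    unfold cis.
    pose proof (sin2_cos2 (G t)) as Hpyth. unfold Rsqr in Hpyth.
    unfold Cdiv, Cinv, Cmult. simpl.
    replace (cos (G t) * (cos (G t) * 1) + sin (G t) * (sin (G t) * 1)) with 1
      by (rewrite <- Hpyth at 1; ring).
    apply injective_projections; simpl; unfold Rdiv; rewrite Rinv_1;
      lazymatch goal with |- ?l = ?r => change (@eq R l r) end.
    - ring.
    - rewrite <- (Rmult_1_r (G' t)) at 1. rewrite <- Hpyth at 1. ring. }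
  apply (is_RInt_fct_extend_pair (U := R_NormedModule) (V := R_NormedModule) (fun t => (0, G' t))).
  - pose proof (is_RInt_const 0 x (0 : R)) as Hconst. simpl.
    match type of Hconst with is_RInt _ _ _ ?v =>
      replace v with (0 : R) in Hconst by (unfold scal; simpl; unfold mult; simpl; ring) end.
    exact Hconst.
  - simpl. apply (is_RInt_derive G G').
    + intros t _. apply is_derive_Reals, HG.
    + intros t _. apply continuity_pt_filterlim, HG'.
Qed.

Lemma partial_prod_real p (a : nat -> C) N t : (forall j, 0 < Im (a j)) ->
  partial_prod p a N (RtoC t) = cis (sumN (fun n => phase p (a n) t) N).
Proof.
  intros Ha_upper. induction N as [|N IH]; cbn [partial_prod sumN].
  - unfold cis. rewrite cos_0, sin_0. reflexivity.
  - rewrite IH, canonical_quotient_cis by apply Ha_upper. apply cis_add.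
Qed.

Lemma filterlim_cis (u : nat -> R) l : Un_cv u l ->
  filterlim (fun N => cis (u N)) eventually (locally (cis l)).
Proof.
  intros Hu.
  pose proof (continuity_seq cos u l (continuity_cos l) Hu) as Hcos.
  pose proof (continuity_seq sin u l (continuity_sin l) Hu) as Hsin.
  apply filterlim_locally. intros eps.
  destruct (Hcos eps (cond_pos eps)) as [N1 H1]. destruct (Hsin eps (cond_pos eps)) as [N2 H2].
  exists (max N1 N2). intros n Hn. split; [apply (H1 n) | apply (H2 n)]; lia.
Qed.

Lemma product_limit_real p (a : nat -> C) (f : C -> C) (G : R -> R) t :
  (forall j, 0 < Im (a j)) ->
  (forall z : C, (forall n, z <> a n) ->
     filterlim (fun N => partial_prod p a N z) eventually (locally (f z))) ->
  Un_cv (fun N => sum_f_R0 (fun n => phase p (a n) t) N) (G t) ->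
  f (RtoC t) = cis (G t).
Proof.
  intros Ha_upper Hf HG.
  assert (Ht_off : forall n, RtoC t <> a n).
  { intros n Hn. specialize (Ha_upper n). rewrite <- Hn in Ha_upper. simpl in Ha_upper. lra. }
  assert (Hcis : filterlim (fun N => partial_prod p a N (RtoC t)) eventually (locally (cis (G t)))).
  { apply (filterlim_ext (fun N => cis (sumN (fun n => phase p (a n) t) N))).
    - intros N. symmetry. apply partial_prod_real, Ha_upper.
    - apply filterlim_cis, Un_cv_sumN, HG. }
  exact (filterlim_locally_unique _ _ _ (Hf _ Ht_off) Hcis).
Qed.

Theorem lemma2p3
  (a : nat -> C) (C0 rho : R) (p : nat) (f : C -> C) (df : R -> C)
  (Ha_upper : forall j, 0 < Im (a j))
  (Ha_sorted : forall j, Cmod (a j) <= Cmod (a (S j)))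
  (Hcount : forall r : R, 1 <= r ->
     forall l : list nat, NoDup l -> List.Forall (fun j => Cmod (a j) <= r) l ->
       INR (length l) <= C0 * Rpower r rho)
  (Hrho_pos : 0 < rho)
  (Hrho_nonint : forall k : Z, rho <> IZR k)
  (Hp : INR p < rho < INR (S p))
  (Hf : forall z : C, (forall n, z <> a n) ->
     filterlim (fun N => partial_prod p a N z) eventually (locally (f z)))
  (Hdf : forall t : R, is_derive f (RtoC t) (df t)) :
  exists M X : R, forall x : R, X <= Rabs x ->
    exists I : C, is_RInt (fun t => (df t / f (RtoC t))%C) 0 x I /\
                  Cmod I <= M * Rpower (Rabs x) rho.
Proof.
  (* [Hrho_nonint] is implied by [Hp]. *)
  destruct Hp as [Hp_lt Hrho_lt].
  destruct (zeros_growth_lower_bound a C0 rho Hrho_pos Ha_upper Ha_sorted Hcount)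
    as [c [Hc Ha_growth]].
  destruct (phase_series_regular p a c rho Hc Hrho_pos Hrho_lt Ha_upper Ha_growth)
    as [G [G' [HG [HG' HG'_cont]]]].
  assert (Hf_real : forall t, f (RtoC t) = cis (G t))
    by (intros t; apply (product_limit_real p a); auto).
  assert (HG0 : G 0 = 0).
  { apply (UL_sequence _ _ _ (HG 0)). intros eps Heps. exists 0%nat. intros n _.
    rewrite sum_eq_R0 by (intros; apply phase_0).
    unfold Rdist. rewrite Rminus_0_r, Rabs_R0. exact Heps. }
  exists (growth_const p c rho), c. intros x Hx. exists ((0, G x) : C). split.
  - pose proof (is_RInt_log_deriv_cis f df G G' x Hf_real Hdf HG' HG'_cont) as Hint.
    rewrite HG0, Rminus_0_r in Hint. exact Hint.
  - rewrite Cmod_imag. apply (phase_series_growth p a c rho); auto.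
Qed.
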